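(* Let $\mathcal Z=\{0,1\}$. For every $\delta>0$ there exist an (even) integer $k$ and a zero-error variable-length $(k,N)$ network code for the network in the context with $k/\mathrm EN\ge \frac45-\delta$. Consequently the computing capacity satisfies $\mathcal C\ge 4/5$.
   Context: Network: sources $s_1,s_2,s_3$, terminal $t$, edges $(s_3,s_1),(s_3,s_2),(s_1,t),(s_2,t)$; $s_j$ observes $\mathbf X_j\in\{0,1\}^k$, all $3k$ bits i.i.d. uniform on $\{0,1\}$; $s_1,s_2$ receive $\mathbf X_3$. A variable-length $(k,N)$ network code: encoders $\phi_1,\phi_2:\{0,1\}^k\times\{0,1\}^k\to\mathcal Z^*$ (finite sequences over $\mathcal Z$) giving $\mathbf Z_1=\phi_1(\mathbf X_1,\mathbf X_3)$ and $\mathbf Z_2=\phi_2(\mathbf X_2,\mathbf X_3)$; a positive-integer-valued stopping time $N$ for the sequence of pairs $(\mathbf Z_1(m),\mathbf Z_2(m))_{m\ge1}$; a decoder $\hat{\boldsymbol\Sigma}=\psi(\mathbf Z_1^N,\mathbf Z_2^N)\in\{0,1,2,3\}^k$, $\mathbf Z_j^N$ the first $N$ symbols. Zero-error means $\Pr(\hat{\boldsymbol\Sigma}\neq\mathbf X_1+\mathbf X_2+\mathbf X_3)=0$ (componentwise integer sum). The rate is $k/(\mathrm EN\log_2|\mathcal Z|)$ and $\mathcal C$ is the supremum of rates over all zero-error codes and all $k$. *)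

From mathcomp Require Import all_boot.
From Stdlib Require Import Reals.

Set Implicit Arguments.
Unset Strict Implicit.
Unset Printing Implicit Defensive.

(* Code alphabet Z = {0,1} = bool; source messages X_j are k-tuples of bits;
   the target X1+X2+X3 (componentwise integer sum) lies in {0,1,2,3}^k = 'I_4^k. *)
Record VLCode (k : nat) := {
  enc1 : k.-tuple bool -> k.-tuple bool -> seq bool;
  enc2 : k.-tuple bool -> k.-tuple bool -> seq bool;
  stopN : k.-tuple bool -> k.-tuple bool -> k.-tuple bool -> nat;
  dec : seq bool -> seq bool -> k.-tuple 'I_4
}.

Section Code.
Variables (k : nat) (c : VLCode k).

Definition Z1 (x1 x2 x3 : k.-tuple bool) : seq bool := enc1 c x1 x3.
Definition Z2 (x1 x2 x3 : k.-tuple bool) : seq bool := enc2 c x2 x3.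

Definition Zpairs (x1 x2 x3 : k.-tuple bool) : seq (bool * bool) :=
  zip (Z1 x1 x2 x3) (Z2 x1 x2 x3).

(* N is a positive-integer-valued stopping time for (Z1(m),Z2(m))_m:
   the event {N = n} is determined by the first n pairs (every input has
   positive probability, so this is the pointwise form), and the first N
   symbols of each Z_j exist. *)
Definition valid_stopping_time : Prop :=
  forall x1 x2 x3 : k.-tuple bool,
    [/\ 1 <= stopN c x1 x2 x3,
        stopN c x1 x2 x3 <= size (Z1 x1 x2 x3),
        stopN c x1 x2 x3 <= size (Z2 x1 x2 x3) &
        forall y1 y2 y3 : k.-tuple bool,
          take (stopN c x1 x2 x3) (Zpairs y1 y2 y3)
            = take (stopN c x1 x2 x3) (Zpairs x1 x2 x3) ->
          stopN c y1 y2 y3 = stopN c x1 x2 x3].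

Definition target (x1 x2 x3 : k.-tuple bool) : k.-tuple 'I_4 :=
  [tuple (inord (nat_of_bool (tnth x1 i) + tnth x2 i + tnth x3 i) : 'I_4) | i < k].

(* Zero error: Pr(decoded != X1+X2+X3) = 0; all 2^(3k) inputs have positive
   probability, so this means correctness on every input. *)
Definition zero_error : Prop :=
  forall x1 x2 x3 : k.-tuple bool,
    let n := stopN c x1 x2 x3 in
    dec c (take n (Z1 x1 x2 x3)) (take n (Z2 x1 x2 x3)) = target x1 x2 x3.

Definition zero_error_code : Prop := valid_stopping_time /\ zero_error.

(* E N for i.i.d. uniform bits, i.e. uniform (X1,X2,X3) over ({0,1}^k)^3 *)
Definition sumN : nat :=
  \sum_(x1 : k.-tuple bool) \sum_(x2 : k.-tuple bool) \sum_(x3 : k.-tuple bool)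
     stopN c x1 x2 x3.

Definition ExpN : R := Rdiv (INR sumN) (INR (2 ^ (3 * k))).

(* rate = k / (E N * log2 |Z|) with |Z| = 2, so log2 |Z| = 1 *)
Definition rate : R := Rdiv (INR k) (Rmult ExpN (Rdiv (ln (INR 2)) (ln 2))).

End Code.

(* rates achieved by zero-error codes (over all k); the computing capacity is
   the supremum of this set *)
Definition achievable_rate (r : R) : Prop :=
  exists (k : nat) (c : VLCode k), zero_error_code c /\ r = rate c.

(* Split each message X_j into halves (a_j, b_j) of m bits.  Source 1 sends
   a1 xor a3, then b1, then a3 restricted to the positions where a1 = a3;
   source 2 sends b2 xor b3, then a2, then b3 where b2 = b3.  Where a1 <> a3
   the sum digit is 1 + a2, elsewhere it is a2 + 2 a3 (likewise on the second
   half), so the terminal may stop after 2m + max(Z, Z') symbols, Z and Z'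
   being the numbers of agreements: independent Binomial(m, 1/2) variables,
   read off the first m symbols of each stream.  From
   4T max(a,b) <= 2T(a+b) + T^2 + (a-b)^2 and the first two binomial moments,
   E max(Z, Z') <= m/2 + 3T/8 when m = T^2, so the rate 2m / E N is at least
   16T / (20T + 3), which tends to 4/5. *)

From mathcomp Require Import all_boot zify.
From Stdlib Require Import Rbase Rpower Lra.
(* The real-number library rebinds [^] on nat to [Nat.pow]; restore [expn]. *)
Import ssrnat.

Set Implicit Arguments.
Unset Strict Implicit.
Unset Printing Implicit Defensive.

Definition bxor (s t : seq bool) : seq bool := [seq p.1 != p.2 | p <- zip s t].

Definition agree (s t : seq bool) : nat := count negb (bxor s t).

Lemma size_bxor s t : size (bxor s t) = minn (size s) (size t).
Proof. by rewrite size_map size_zip. Qed.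

Lemma nth_bxor s t i : i < minn (size s) (size t) ->
  nth false (bxor s t) i = (nth false s i != nth false t i).
Proof. by move=> lti; rewrite (nth_map (false, false)) ?nth_zip_cond size_zip lti. Qed.

Lemma agree_cons a b s t : agree (a :: s) (b :: t) = (a == b) + agree s t.
Proof. by rewrite /agree /= negbK. Qed.

Lemma agree_le s t : agree s t <= size s.
Proof. by rewrite (leq_trans (count_size _ _)) // size_bxor geq_minl. Qed.

Fixpoint unmask (T : Type) (x0 : T) (m : bitseq) (e : seq T) : seq T :=
  if m is b :: m' then
    if b then head x0 e :: unmask x0 m' (behead e) else x0 :: unmask x0 m' e
  else [::].

Section Unmask.
Variables (T : Type) (x0 : T).

Lemma unmask_cat m e e' : count id m <= size e -> unmask x0 m (e ++ e') = unmask x0 m e.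
Proof.
elim: m e => [|[] m IHm] e //=; last by move=> le; rewrite IHm.
by case: e => [|a e] //= le; rewrite IHm.
Qed.

Lemma nth_unmask_mask m s i : size s = size m -> nth false m i ->
  nth x0 (unmask x0 m (mask m s)) i = nth x0 s i.
Proof.
elim: m s i => [|b m IHm] [|a s] [|i] //= [eq_sz]; first by case: b.
by case: b => /= mi; apply: IHm.
Qed.

End Unmask.

Lemma take_zip (S T : Type) n (s : seq S) (t : seq T) :
  take n (zip s t) = zip (take n s) (take n t).
Proof. by elim: n s t => [|n IHn] [|a s] [|b t] //=; rewrite IHn. Qed.

Lemma take_zip_inj (S T : Type) n (s s' : seq S) (t t' : seq T) :
  n <= size s -> n <= size s' -> n <= size t -> n <= size t' ->
  take n (zip s t) = take n (zip s' t') -> take n s = take n s' /\ take n t = take n t'.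
Proof.
move=> ns ns' nt nt'; rewrite !take_zip => eq_zip.
split.
  by have := congr1 unzip1 eq_zip; rewrite !unzip1_zip ?size_takel.
by have := congr1 unzip2 eq_zip; rewrite !unzip2_zip ?size_takel.
Qed.

Lemma take_as_mask (T : Type) n (s : seq T) : n <= size s ->
  take n s = mask (nseq n true ++ nseq (size s - n) false) s.
Proof.
move=> le_n; rewrite -{2 3}(cat_take_drop n s) mask_cat ?size_nseq ?size_takel //.
by rewrite mask_true ?size_takel // mask_false cats0.
Qed.

Lemma drop_as_mask (T : Type) n (s : seq T) : n <= size s ->
  drop n s = mask (nseq n false ++ nseq (size s - n) true) s.
Proof.
move=> le_n; rewrite -{2 3}(cat_take_drop n s) mask_cat ?size_nseq ?size_takel //.
by rewrite mask_false mask_true // cat_take_drop size_drop.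
Qed.

Lemma sum_tuple_cons n (F : n.+1.-tuple bool -> nat) :
  \sum_(x : n.+1.-tuple bool) F x =
  \sum_(x : n.-tuple bool) (F [tuple of true :: x] + F [tuple of false :: x]).
Proof.
rewrite (reindex (fun p : bool * n.-tuple bool => [tuple of p.1 :: p.2])) /=.
  rewrite -(pair_big xpredT xpredT (fun b (x : n.-tuple bool) => F [tuple of b :: x])).
  by rewrite /= big_bool -big_split.
exists (fun t => (thead t, [tuple of behead t])) => [[b x] _ | t _] /=.
  by congr pair; apply: val_inj.
by rewrite [RHS]tuple_eta.
Qed.

Lemma sum_tuple_const n c : \sum_(x : n.-tuple bool) c = 2 ^ n * c.
Proof. by rewrite sum_nat_const card_tuple card_bool. Qed.

Lemma agree_mask_cons b p a x e c :
  agree (mask (b :: p) (a :: x)) (mask (b :: p) (e :: c))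
  = (b && (a == e)) + agree (mask p x) (mask p c).
Proof. by case: b; rewrite //= agree_cons. Qed.

Lemma sum_agree_mask n p c : size p = n -> size c = n ->
  2 * \sum_(x : n.-tuple bool) agree (mask p x) (mask p c) = 2 ^ n * count id p.
Proof.
elim: n p c => [|n IHn] [|b p] [|e c] //=.
  by move=> _ _; rewrite big1 // => x _; rewrite tuple0.
move=> [size_p] [size_c]; rewrite sum_tuple_cons.
have pair_terms y : (b && (true == e)) + y + ((b && (false == e)) + y) = b + 2 * y.
  by case: b; case: e => /=; lia.
under eq_bigr => x _ do rewrite /= !agree_mask_cons pair_terms.
rewrite big_split /= sum_tuple_const -big_distrr /= mulnDr mulnCA IHn // expnS; lia.
Qed.

Lemma sum_agree_mask_sqr n p c : size p = n -> size c = n ->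
  4 * \sum_(x : n.-tuple bool) agree (mask p x) (mask p c) ^ 2
  = 2 ^ n * (count id p ^ 2 + count id p).
Proof.
elim: n p c => [|n IHn] [|b p] [|e c] //=.
  by move=> _ _; rewrite big1 // => x _; rewrite tuple0.
move=> [size_p] [size_c]; rewrite sum_tuple_cons.
have pair_terms y :
  ((b && (true == e)) + y) ^ 2 + ((b && (false == e)) + y) ^ 2 = b + 2 * b * y + 2 * y ^ 2.
  by case: b; case: e => /=; lia.
under eq_bigr => x _ do rewrite /= !agree_mask_cons pair_terms.
rewrite big_split big_split /= sum_tuple_const -!big_distrr /= expnS.
have := sum_agree_mask size_p size_c; have := IHn _ _ size_p size_c.
set S2 := \sum_(x : n.-tuple bool) _ ^ 2; set S := \sum_(x : n.-tuple bool) _.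
by clear pair_terms; case: b; nia.
Qed.

Lemma maxn_amgm T a b :
  4 * T * maxn a b + 2 * (a * b) <= 2 * T * (a + b) + T ^ 2 + a ^ 2 + b ^ 2.
Proof.
wlog le_ab : a b / a <= b => [hwlog|].
  by case/orP: (leq_total a b) => /hwlog //; rewrite maxnC => h; lia.
rewrite (maxn_idPr le_ab) -(subnKC le_ab); set d := b - a.
have := (nat_Cauchy T d).1; nia.
Qed.

Lemma sum_tuple_sep n (F G : n.-tuple bool -> nat) :
  \sum_(x1 : n.-tuple bool) \sum_(x2 : n.-tuple bool) (F x1 + G x2)
  = 2 ^ n * (\sum_x F x + \sum_x G x).
Proof.
rewrite (eq_bigr (fun x1 => 2 ^ n * F x1 + \sum_x G x)) => [|x1 _].
  by rewrite big_split sum_tuple_const -big_distrr mulnDr.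
by rewrite big_split sum_tuple_const.
Qed.

Lemma sum_maxn_le T n (F G : n.-tuple bool -> nat) :
  16 * T * \sum_(x1 : n.-tuple bool) \sum_(x2 : n.-tuple bool) maxn (F x1) (G x2)
    + 8 * ((\sum_x F x) * \sum_x G x)
  <= 2 ^ n * (8 * T * \sum_x F x + 4 * \sum_x F x ^ 2 + 2 ^ n * (4 * T ^ 2)
              + (8 * T * \sum_x G x + 4 * \sum_x G x ^ 2)).
Proof.
have sumF : \sum_x (8 * T * F x + 4 * F x ^ 2 + 4 * T ^ 2)
            = 8 * T * \sum_x F x + 4 * \sum_x F x ^ 2 + 2 ^ n * (4 * T ^ 2).
  by rewrite big_split big_split /= sum_tuple_const -!big_distrr.
have sumG : \sum_x (8 * T * G x + 4 * G x ^ 2) = 8 * T * \sum_x G x + 4 * \sum_x G x ^ 2.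
  by rewrite big_split -!big_distrr.
rewrite -sumF -sumG -sum_tuple_sep big_distrlr [16 * T * _]big_distrr [8 * _]big_distrr.
rewrite -big_split /=; apply: leq_sum => x1 _.
rewrite !big_distrr -big_split /=; apply: leq_sum => x2 _.
by have := maxn_amgm T (F x1) (G x2); lia.
Qed.

Lemma sum_maxn_agree T n r p q c :
  size p = n -> size q = n -> size c = n -> count id p = r -> count id q = r ->
  16 * T * \sum_(x1 : n.-tuple bool) \sum_(x2 : n.-tuple bool)
             maxn (agree (mask p x1) (mask p c)) (agree (mask q x2) (mask q c))
  <= 2 ^ n * 2 ^ n * (8 * T * r + 4 * T ^ 2 + 2 * r).
Proof.
move=> size_p size_q size_c count_p count_q.
have := sum_maxn_le T (fun x : n.-tuple bool => agree (mask p x) (mask p c))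
                      (fun x : n.-tuple bool => agree (mask q x) (mask q c)).
have := sum_agree_mask size_p size_c; have := sum_agree_mask_sqr size_p size_c.
have := sum_agree_mask size_q size_c; have := sum_agree_mask_sqr size_q size_c.
rewrite count_p count_q /=.
set SA2 := \sum_(x : n.-tuple bool) agree (mask p x) (mask p c) ^ 2.
set SA := \sum_(x : n.-tuple bool) agree (mask p x) (mask p c).
set SB2 := \sum_(x : n.-tuple bool) agree (mask q x) (mask q c) ^ 2.
set SB := \sum_(x : n.-tuple bool) agree (mask q x) (mask q c).
set K := 2 ^ n => B2 B1 A2 A1.
have -> : 8 * (SA * SB) = 2 * ((2 * SA) * (2 * SB)) by lia.
have -> : K * (8 * T * SA + 4 * SA2 + K * (4 * T ^ 2) + (8 * T * SB + 4 * SB2))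
        = 4 * T * K * (2 * SA) + K * (4 * SA2) + K * K * (4 * T ^ 2)
          + 4 * T * K * (2 * SB) + K * (4 * SB2) by lia.
rewrite A1 A2 B1 B2; lia.
Qed.

Definition digit (flag other known : bool) : nat :=
  if flag then 1 + other else other + 2 * known.

Lemma digit_correct a b c w : (a == c) ==> (w == c) -> digit (a != c) b w = a + b + c.
Proof. by case: a; case: b; case: c; case: w. Qed.

Section SumCode.
Variable m : nat.
Local Notation k := (m + m).

(* The zero padding keeps every prefix of length N <= 3m available. *)
Definition half_encode (s t r : seq bool) : seq bool :=
  let u := bxor s t in u ++ r ++ mask (map negb u) t ++ nseq m false.

Definition flags (z : seq bool) : seq bool := take m z.
Definition raw (z : seq bool) : seq bool := take m (drop m z).
Definition recovered (z : seq bool) : seq bool :=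
  unmask false (map negb (flags z)) (drop k z).

Section HalfEncode.
Variables (s t r : seq bool).
Hypotheses (size_s : size s = m) (size_t : size t = m) (size_r : size r = m).

Lemma size_bxor_half : size (bxor s t) = m.
Proof. by rewrite size_bxor size_s size_t minnn. Qed.

Lemma size_half_encode : size (half_encode s t r) = k + agree s t + m.
Proof.
rewrite /half_encode !size_cat size_bxor_half size_r size_nseq size_mask.
  by rewrite count_map !addnA.
by rewrite size_map size_bxor_half.
Qed.

Lemma take_half_encode : take m (half_encode s t r) = bxor s t.
Proof. by rewrite take_size_cat ?size_bxor_half. Qed.

Lemma flags_half_encode N : m <= N -> flags (take N (half_encode s t r)) = bxor s t.
Proof. by move=> le_mN; rewrite /flags take_takel // take_half_encode. Qed.

Lemma raw_half_encode N : k <= N -> raw (take N (half_encode s t r)) = r.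
Proof.
move=> le_kN; rewrite /raw take_drop take_takel // -take_drop.
by rewrite drop_size_cat ?size_bxor_half // take_size_cat.
Qed.

Lemma nth_recovered_half_encode N i : k + agree s t <= N -> i < m ->
  nth false s i = nth false t i ->
  nth false (recovered (take N (half_encode s t r))) i = nth false t i.
Proof.
move=> le_N lt_im eq_st; set w := map negb (bxor s t).
have size_w : size w = m by rewrite size_map size_bxor_half.
have size_mask_w : size (mask w t) = agree s t.
  by rewrite size_mask ?size_w ?size_t // count_map.
rewrite /recovered flags_half_encode; last by lia.
rewrite -/w -(subnK (_ : k <= N)); last by lia.
rewrite -take_drop -drop_drop !drop_size_cat ?size_bxor_half // take_cat size_mask_w.
rewrite ltnNge leq_subRL ?le_N /=; last by lia.
rewrite -/w unmask_cat ?nth_unmask_mask ?size_w //; last by rewrite size_mask_w count_map.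
by rewrite (nth_map false) ?size_bxor_half // nth_bxor ?size_s ?size_t ?minnn // eq_st negbK.
Qed.

End HalfEncode.

Definition encode1 (x1 x3 : k.-tuple bool) : seq bool :=
  half_encode (take m x1) (take m x3) (drop m x1).
Definition encode2 (x2 x3 : k.-tuple bool) : seq bool :=
  half_encode (drop m x2) (drop m x3) (take m x2).

Definition stop_time (x1 x2 x3 : k.-tuple bool) : nat :=
  k + maxn (agree (take m x1) (take m x3)) (agree (drop m x2) (drop m x3)).

Definition decode_at (z1 z2 : seq bool) (i : nat) : nat :=
  if i < m then
    digit (nth false (flags z1) i) (nth false (raw z2) i) (nth false (recovered z1) i)
  else
    digit (nth false (flags z2) (i - m)) (nth false (raw z1) (i - m))
      (nth false (recovered z2) (i - m)).

Definition decode (z1 z2 : seq bool) : k.-tuple 'I_4 :=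
  [tuple (inord (decode_at z1 z2 i) : 'I_4) | i < k].

Definition sum_code : VLCode k := Build_VLCode encode1 encode2 stop_time decode.

Lemma size_take_half (x : k.-tuple bool) : size (take m x) = m.
Proof. by rewrite size_takel // size_tuple leq_addr. Qed.

Lemma size_drop_half (x : k.-tuple bool) : size (drop m x) = m.
Proof. by rewrite size_drop size_tuple addnK. Qed.

Lemma stop_timeE x1 x2 x3 : stop_time x1 x2 x3 =
  k + maxn (count negb (take m (encode1 x1 x3))) (count negb (take m (encode2 x2 x3))).
Proof.
by rewrite /encode1 /encode2 !take_half_encode ?size_take_half ?size_drop_half.
Qed.

Lemma sum_code_stopping_time : 0 < m -> valid_stopping_time sum_code.
Proof.
move=> m_gt0 x1 x2 x3; rewrite /Z1 /Z2 /=.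
have size_enc1 y1 y3 : k + m <= size (encode1 y1 y3).
  by rewrite size_half_encode ?size_take_half ?size_drop_half //; lia.
have size_enc2 y2 y3 : k + m <= size (encode2 y2 y3).
  by rewrite size_half_encode ?size_take_half ?size_drop_half //; lia.
have le_stop : stop_time x1 x2 x3 <= k + m.
  rewrite leq_add2l geq_max.
  by have := agree_le (take m x1) (take m x3); have := agree_le (drop m x2) (drop m x3);
    rewrite size_take_half size_drop_half => -> ->.
have le_m_stop : m <= stop_time x1 x2 x3 by rewrite /stop_time; lia.
split; [by rewrite /stop_time; lia | exact: leq_trans le_stop (size_enc1 _ _)
       | exact: leq_trans le_stop (size_enc2 _ _) |].
move=> y1 y2 y3; rewrite /Zpairs /Z1 /Z2 /= => /(congr1 (take m)).
rewrite !take_takel // => /take_zip_inj [||||eq1 eq2]; last by rewrite !stop_timeE eq1 eq2.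
all: by [apply: leq_trans (leq_addl k m) (size_enc1 _ _)
        | apply: leq_trans (leq_addl k m) (size_enc2 _ _)].
Qed.

Lemma decode_at_correct x1 x2 x3 i : i < k ->
  let N := stop_time x1 x2 x3 in
  decode_at (take N (encode1 x1 x3)) (take N (encode2 x2 x3)) i
  = nth false x1 i + nth false x2 i + nth false x3 i.
Proof.
move=> lt_ik N.
have le_kN : k <= N by apply: leq_addr.
have le_lo : k + agree (take m x1) (take m x3) <= N by rewrite leq_add2l leq_maxl.
have le_hi : k + agree (drop m x2) (drop m x3) <= N by rewrite leq_add2l leq_maxr.
have sizes := (size_take_half, size_drop_half).
rewrite /decode_at /encode1 /encode2; case: ltnP => [lt_im | le_mi].
  rewrite flags_half_encode ?raw_half_encode ?sizes //; last by lia.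
  rewrite nth_bxor ?sizes ?minnn // !nth_take //; apply: digit_correct.
  by apply/implyP => /eqP eq13; rewrite nth_recovered_half_encode ?sizes ?nth_take.
have lt_jm : i - m < m by lia.
have nth_dropE (x : k.-tuple bool) : nth false (drop m x) (i - m) = nth false x i.
  by rewrite nth_drop subnKC.
rewrite flags_half_encode ?raw_half_encode ?sizes //; last by lia.
rewrite nth_bxor ?sizes ?minnn // !nth_dropE digit_correct; first by rewrite (addnC (nth _ x2 _)).
by apply/implyP => /eqP eq23; rewrite nth_recovered_half_encode ?sizes ?nth_dropE.
Qed.

Lemma sum_code_zero_error : zero_error sum_code.
Proof.
move=> x1 x2 x3; apply: eq_from_tnth => i; rewrite !tnth_mktuple !(tnth_nth false).
by rewrite /Z1 /Z2 /= decode_at_correct.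
Qed.

End SumCode.

Section Expectation.
Variable m : nat.
Local Notation k := (m + m).
Local Notation lo := (nseq m true ++ nseq m false).
Local Notation hi := (nseq m false ++ nseq m true).

Lemma stop_time_mask (x1 x2 x3 : k.-tuple bool) : stop_time x1 x2 x3 =
  k + maxn (agree (mask lo x1) (mask lo x3)) (agree (mask hi x2) (mask hi x3)).
Proof. by rewrite /stop_time !take_as_mask ?drop_as_mask ?size_tuple ?addnK ?leq_addr. Qed.

Lemma sum_stop_time_le T (x3 : k.-tuple bool) :
  16 * T * \sum_(x1 : k.-tuple bool) \sum_(x2 : k.-tuple bool) stop_time x1 x2 x3
  <= 2 ^ k * 2 ^ k * (40 * T * m + 4 * T ^ 2 + 2 * m).
Proof.
rewrite (eq_bigr (fun x1 : k.-tuple bool => 2 ^ k * k + \sum_(x2 : k.-tuple bool)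
   maxn (agree (mask lo x1) (mask lo x3)) (agree (mask hi x2) (mask hi x3)))) => [|x1 _].
  rewrite big_split sum_tuple_const.
  have := @sum_maxn_agree T k m lo hi x3.
  rewrite !size_cat !count_cat !size_nseq !count_nseq size_tuple /= mul1n mul0n addn0.
  by move=> /(_ erefl erefl erefl erefl erefl); lia.
by under eq_bigr => x2 _ do rewrite stop_time_mask; rewrite big_split sum_tuple_const.
Qed.

Lemma sumN_sum_code_le T :
  16 * T * sumN (sum_code m) <= 2 ^ k * (2 ^ k * 2 ^ k) * (40 * T * m + 4 * T ^ 2 + 2 * m).
Proof.
rewrite /sumN /= (eq_bigr (fun x1 : k.-tuple bool => \sum_(x3 : k.-tuple bool) \sum_(x2 : k.-tuple bool)
  stop_time x1 x2 x3)) => [|x1 _]; last exact: exchange_big.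
rewrite exchange_big big_distrr -mulnA -sum_tuple_const; apply: leq_sum => x3 _.
exact: sum_stop_time_le.
Qed.

End Expectation.

Lemma Nat_pow_expn a b : Nat.pow a b = expn a b.
Proof. by elim: b => [|b IHb] //=; rewrite expnS IHb. Qed.

Lemma sumN_gt0 k (c : VLCode k) : valid_stopping_time c -> 0 < sumN c.
Proof.
move=> valid_c; apply: (@leq_trans (\sum_(x1 : k.-tuple bool) \sum_(x2 : k.-tuple bool)
                                     \sum_(x3 : k.-tuple bool) 1)).
  by rewrite !sum_tuple_const !muln1 !muln_gt0 expn_gt0.
apply: leq_sum => x1 _; apply: leq_sum => x2 _; apply: leq_sum => x3 _.
by case: (valid_c x1 x2 x3).
Qed.

Section Rates.
Local Open Scope R_scope.

Lemma Rdiv_le_div_cross a b c d : 0 < b -> 0 < d -> a * d <= c * b -> a / b <= c / d.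
Proof.
move=> b_gt0 d_gt0 le_cross; apply: (Rmult_le_reg_r (b * d)); first by nra.
have -> : a / b * (b * d) = a * d by field; lra.
by have -> : c / d * (b * d) = c * b by field; lra.
Qed.

Lemma four_fifths_le T d : 0 < d -> 1 < INR T * d ->
  4 / 5 - d <= INR (16 * T) / INR (20 * T + 3).
Proof.
move=> d_gt0 Td_gt1; have T_gt0 : 0 < INR T by nra.
rewrite -!multE -!plusE !mult_INR plus_INR mult_INR /= -[4 / 5 - d]Rdiv_1_r.
apply: Rdiv_le_div_cross; nra.
Qed.

Lemma rate_eq k (c : VLCode k) : (0 < sumN c)%N ->
  rate c = INR k * INR (expn 2 (3 * k)) / INR (sumN c).
Proof.
move=> /ltP/lt_0_INR S_gt0.
have K_gt0 : 0 < INR (expn 2 (3 * k)) by apply/lt_0_INR/ltP; rewrite expn_gt0.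
rewrite /rate /ExpN Nat_pow_expn (_ : INR 2 = 2); last by rewrite /=; lra.
have ln2_gt0 := ln_lt_2; field; lra.
Qed.

Lemma rate_ge k (c : VLCode k) (a b : nat) : (0 < a)%N -> (0 < sumN c)%N ->
  (b * sumN c <= a * (k * expn 2 (3 * k)))%N -> INR b / INR a <= rate c.
Proof.
move=> a_gt0 S_gt0 /leP/le_INR le_bS; rewrite rate_eq //.
apply: Rdiv_le_div_cross; try exact/lt_0_INR/ltP.
by move: le_bS; rewrite -!multE !mult_INR; nra.
Qed.

End Rates.

Lemma rate_sum_code_ge T : 0 < T ->
  (INR (16 * T) / INR (20 * T + 3) <= rate (sum_code (T * T)))%R.
Proof.
move=> T_gt0; set m := T * T; have m_gt0 : 0 < m by rewrite muln_gt0 T_gt0.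
apply: rate_ge; [by rewrite addn_gt0 orbT | exact/sumN_gt0/sum_code_stopping_time |].
have -> : expn 2 (3 * (m + m)) = 2 ^ (m + m) * (2 ^ (m + m) * 2 ^ (m + m)).
  by rewrite -!expnD; congr expn; lia.
have := sumN_sum_code_le m T.
have -> : 40 * T * m + 4 * T ^ 2 + 2 * m = (m + m) * (20 * T + 3) by rewrite /m; nia.
lia.
Qed.

Lemma sum_code_rate_close d : (0 < d)%R ->
  exists k : nat, ~~ odd k /\
    exists c : VLCode k, zero_error_code c /\ (4 / 5 - d <= rate c)%R.
Proof.
move=> d_gt0; have [T Td_gt1] := INR_archimed d 1 d_gt0.
have T_gt0 : 0 < T by case: T Td_gt1 => [|T] //=; rewrite Rmult_0_l; lra.
exists (T * T + T * T); split; first by rewrite addnn odd_double.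
exists (sum_code (T * T)); split.
  split; last exact: sum_code_zero_error.
  by apply: sum_code_stopping_time; rewrite muln_gt0 T_gt0.
exact: Rle_trans (four_fifths_le d_gt0 Td_gt1) (rate_sum_code_ge T_gt0).
Qed.

Theorem mainTheorem14 :
  (forall delta : R, (0 < delta)%R ->
     exists k : nat, ~~ odd k /\
       exists c : VLCode k, zero_error_code c /\ (4 / 5 - delta <= rate c)%R)
  /\
  (forall U : R, is_upper_bound achievable_rate U -> (4 / 5 <= U)%R).
Proof.
split; first exact: sum_code_rate_close.
move=> U U_ub; apply: Rnot_lt_le => U_lt.
have [k [_ [c [zero_c rate_c]]]] := @sum_code_rate_close ((4 / 5 - U) / 2) ltac:(lra).
have : (rate c <= U)%R by apply: U_ub; exists k, c.
lra.
Qed.
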